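(* Let $\mathbf L=(L,\vee,\wedge)$ be a partial lattice and $E\in\operatorname{Con}\mathbf L$. Then $\mathbf L/E:=(L/E,\vee,\wedge)$ is a partial lattice.
   Context: A partial lattice is a set $L$ with two partial binary operations $\vee,\wedge$ satisfying the strong identities $x\vee x\stackrel{s}{\approx}x$, $x\wedge x\stackrel{s}{\approx}x$, $x\vee y\stackrel{s}{\approx}y\vee x$, $x\wedge y\stackrel{s}{\approx}y\wedge x$, $(x\vee y)\vee z\stackrel{s}{\approx}x\vee(y\vee z)$, $(x\wedge y)\wedge z\stackrel{s}{\approx}x\wedge(y\wedge z)$ (for every assignment, one side is defined iff the other is, and then they are equal) and the duality conditions: if $a\vee b$ is defined and equals $a$ then $a\wedge b$ is defined and equals $b$; if $a\wedge b$ is defined and equals $a$ then $a\vee b$ is defined and equals $b$. Its induced order is $x\leq y$ iff $x\vee y$ is defined and equals $y$. The two-point extension $\mathbf L^*=(L^*,\leq^* )$, with new elements $0,1\notin L$: $L^*$ is $L$ together with a new top element $1$ if $\vee$ is not everywhere defined and a new bottom element $0$ if $\wedge$ is not everywhere defined; $\leq^*$ extends $\leq$ by putting $0$ below and $1$ above all elements; it is a lattice with operations $\vee^*=\sup_{\leq^*}$, $\wedge^*=\inf_{\leq^*}$. A congruence on $\mathbf L$ is an equivalence relation $E$ on $L$ with $\Theta(E)\cap L^2=E$, where $\Theta(E)$ is the lattice congruence on $\mathbf L^*$ generated by $E$; $\operatorname{Con}\mathbf L$ is the set of these. For $E\in\operatorname{Con}\mathbf L$ the partial operations on $L/E$ are: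 $[x]E\vee[y]E:=[x\vee^*y]\Theta(E)\cap L$ if this set is non-empty, undefined otherwise; $[x]E\wedge[y]E:=[x\wedge^*y]\Theta(E)\cap L$ if this set is non-empty, undefined otherwise (these are well defined). *)

From Stdlib Require Import ClassicalEpsilon.

Set Implicit Arguments.

Definition obind {A B : Type} (f : A -> option B) (o : option A) : option B :=
  match o with Some a => f a | None => None end.

Definition pset (T : Type) := T -> Prop.

Definition partial_lattice_on (T : Type) (P : pset T)
  (j m : T -> T -> option T) : Prop :=
  (forall x y z, P x -> P y -> j x y = Some z -> P z) /\
  (forall x y z, P x -> P y -> m x y = Some z -> P z) /\
  (forall x, P x -> j x x = Some x) /\
  (forall x, P x -> m x x = Some x) /\
  (forall x y, P x -> P y -> j x y = j y x) /\
  (forall x y, P x -> P y -> m x y = m y x) /\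
  (* associativity: one side defined iff the other is, and then equal *)
  (forall x y z, P x -> P y -> P z ->
     obind (fun u => j u z) (j x y) = obind (fun v => j x v) (j y z)) /\
  (forall x y z, P x -> P y -> P z ->
     obind (fun u => m u z) (m x y) = obind (fun v => m x v) (m y z)) /\
  (forall a b, P a -> P b -> j a b = Some a -> m a b = Some b) /\
  (forall a b, P a -> P b -> m a b = Some a -> j a b = Some b).

Definition partial_lattice (L : Type) (j m : L -> L -> option L) : Prop :=
  partial_lattice_on (fun _ : L => True) j m.

Section Ext.
Context {L : Type} (j m : L -> L -> option L).

Definition ple (x y : L) : Prop := j x y = Some y.

Definition join_total : Prop := forall x y, exists z, j x y = Some z.
Definition meet_total : Prop := forall x y, exists z, m x y = Some z.

(* the two-point extension L^*: new bottom 0 and new top 1 *)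
Inductive ext : Type := Bot | Elt (x : L) | Top.

Definition inLs (e : ext) : Prop :=
  match e with
  | Bot => ~ meet_total
  | Elt _ => True
  | Top => ~ join_total
  end.

Definition leS (a b : ext) : Prop :=
  match a, b with
  | Bot, _ => True
  | _, Top => True
  | Elt x, Elt y => ple x y
  | _, _ => False
  end.

Definition is_sup (a b s : ext) : Prop :=
  inLs s /\ leS a s /\ leS b s /\
  forall t, inLs t -> leS a t -> leS b t -> leS s t.

Definition is_inf (a b s : ext) : Prop :=
  inLs s /\ leS s a /\ leS s b /\
  forall t, inLs t -> leS t a -> leS t b -> leS t s.

Definition lat_cong (th : ext -> ext -> Prop) : Prop :=
  (forall a b, th a b -> inLs a /\ inLs b) /\
  (forall a, inLs a -> th a a) /\
  (forall a b, th a b -> th b a) /\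
  (forall a b c, th a b -> th b c -> th a c) /\
  (forall a b c d s t, th a b -> th c d -> is_sup a c s -> is_sup b d t -> th s t) /\
  (forall a b c d s t, th a b -> th c d -> is_inf a c s -> is_inf b d t -> th s t).

Definition Theta (E : L -> L -> Prop) (a b : ext) : Prop :=
  forall th, lat_cong th -> (forall x y, E x y -> th (Elt x) (Elt y)) -> th a b.

Definition equivalence_rel (E : L -> L -> Prop) : Prop :=
  (forall x, E x x) /\ (forall x y, E x y -> E y x) /\
  (forall x y z, E x y -> E y z -> E x z).

Definition is_con (E : L -> L -> Prop) : Prop :=
  equivalence_rel E /\ forall x y, Theta E (Elt x) (Elt y) <-> E x y.

(* L/E: its elements are the E-classes [x]E = E x, viewed as subsets of L *)
Definition qcar (E : L -> L -> Prop) : pset (pset L) :=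
  fun A => exists x, A = E x.

(* [x]E v [y]E = C  iff  C = [x v^* y]Theta(E) ∩ L and C is non-empty *)
Definition qjoin_rel (E : L -> L -> Prop) (A B C : pset L) : Prop :=
  exists x y s, A = E x /\ B = E y /\ is_sup (Elt x) (Elt y) s /\
    C = (fun z => Theta E s (Elt z)) /\ exists z, C z.

Definition qmeet_rel (E : L -> L -> Prop) (A B C : pset L) : Prop :=
  exists x y s, A = E x /\ B = E y /\ is_inf (Elt x) (Elt y) s /\
    C = (fun z => Theta E s (Elt z)) /\ exists z, C z.

Definition qop (R : pset L -> pset L -> pset L -> Prop) (A B : pset L)
  : option (pset L) :=
  epsilon (inhabits None)
    (fun o => match o with
              | Some C => R A B C
              | None => forall C, ~ R A B C
              end).

Definition qjoin (E : L -> L -> Prop) := qop (qjoin_rel E).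
Definition qmeet (E : L -> L -> Prop) := qop (qmeet_rel E).

End Ext.

(* A strongly associative, commutative, idempotent partial operation
   is a partial semilattice: a defined value x ∨ y is the least upper bound of x
   and y in the induced order, and x ∨ y is undefined exactly when x and y have
   no common upper bound.  Hence the two-point extension L* is a lattice in which
   every pair has a unique supremum, the supremum of three elements does not
   depend on the bracketing, and x ∨* y = Top when x ∨ y is undefined.
   Exchanging Bot and Top is an order anti-isomorphism from L* for (m, j) to L*
   for (j, m); it turns suprema into infima and preserves Θ(E).  Consequently the
   quotient meet of (j, m) is the quotient join of the dual partial lattice
   (m, j), and it suffices to establish the join axioms once.  Writing
   class_of s for the option "[s]Θ(E) ∩ L if non-empty", the quotient join of
   [x]E and [y]E is class_of (x ∨* y); since Θ(E) is a lattice congruence of L*,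
   class_of is Θ-invariant, which yields idempotency, commutativity and
   associativity of the quotient join.  The absorption (duality) law follows
   from Θ(E) being compatible with infima: if x ∨* y Θ x then y = y ∧* (x ∨* y)
   Θ y ∧* x. *)
From Stdlib Require Import ClassicalEpsilon FunctionalExtensionality PropExtensionality.

Section PartialSemilattice.
Variable L : Type.
Variable op : L -> L -> option L.
Hypothesis op_idem : forall x, op x x = Some x.
Hypothesis op_comm : forall x y, op x y = op y x.
Hypothesis op_assoc : forall x y z,
  obind (fun u => op u z) (op x y) = obind (fun v => op x v) (op y z).

Lemma ple_antisym x y : ple op x y -> ple op y x -> x = y.
Proof.
  unfold ple; intros Hxy Hyx.
  rewrite op_comm, Hyx in Hxy. congruence.
Qed.

Lemma ple_trans x y z : ple op x y -> ple op y z -> ple op x z.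
Proof.
  unfold ple; intros Hxy Hyz.
  pose proof (op_assoc x y z) as A. rewrite Hxy, Hyz in A; simpl in A. congruence.
Qed.

Lemma op_some_lub x y z : op x y = Some z ->
  ple op x z /\ ple op y z /\ forall t, ple op x t -> ple op y t -> ple op z t.
Proof.
  unfold ple; intros H. split; [|split].
  - pose proof (op_assoc x x y) as A. rewrite op_idem, H in A; simpl in A. congruence.
  - pose proof (op_assoc y y x) as A. rewrite op_idem, op_comm, H in A; simpl in A.
    congruence.
  - intros t Hx Hy. pose proof (op_assoc x y t) as A. rewrite H, Hy in A; simpl in A.
    congruence.
Qed.

Lemma op_none_no_ub x y : op x y = None -> forall t, ple op x t -> ple op y t -> False.
Proof.
  unfold ple; intros H t Hx Hy.
  pose proof (op_assoc x y t) as A. rewrite H, Hy in A; simpl in A. congruence.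
Qed.
End PartialSemilattice.

Section Extension.
Variable L : Type.
Variables j m : L -> L -> option L.
Hypothesis PL : partial_lattice j m.

Local Ltac pl_axiom := destruct PL as (?&?&?&?&?&?&?&?&?&?); auto.

Lemma join_idem x : j x x = Some x. Proof. pl_axiom. Qed.
Lemma join_comm x y : j x y = j y x. Proof. pl_axiom. Qed.
Lemma join_assoc x y z :
  obind (fun u => j u z) (j x y) = obind (fun v => j x v) (j y z).
Proof. pl_axiom. Qed.
Lemma meet_comm x y : m x y = m y x. Proof. pl_axiom. Qed.
Lemma join_absorb a b : j a b = Some a -> m a b = Some b. Proof. pl_axiom. Qed.
Lemma meet_absorb a b : m a b = Some a -> j a b = Some b. Proof. pl_axiom. Qed.

Lemma partial_lattice_dual : partial_lattice m j.
Proof. destruct PL as (?&?&?&?&?&?&?&?&?&?); repeat split; auto. Qed.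

Lemma ple_meet x y : ple j x y <-> m y x = Some x.
Proof.
  unfold ple; split; intro H.
  - apply join_absorb. rewrite join_comm; exact H.
  - rewrite meet_comm in H. exact (meet_absorb _ _ H).
Qed.

Lemma leS_refl a : leS j a a.
Proof. destruct a; simpl; auto. apply join_idem. Qed.

Lemma leS_trans a b c : leS j a b -> leS j b c -> leS j a c.
Proof.
  destruct a, b, c; simpl; auto; try tauto. apply (ple_trans L j join_assoc).
Qed.

Lemma leS_antisym a b : leS j a b -> leS j b a -> a = b.
Proof.
  destruct a, b; simpl; try tauto.
  intros; f_equal; eapply (ple_antisym L j join_comm); eauto.
Qed.

Lemma sup_defined x y z : j x y = Some z -> is_sup j m (Elt x) (Elt y) (Elt z).
Proof.
  intro H. destruct (op_some_lub L j join_idem join_comm join_assoc x y z H)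
    as (Hx & Hy & Hlub).
  split; [simpl; auto|]. split; [exact Hx|]. split; [exact Hy|].
  intros [|w|] _; simpl; auto.
Qed.

Lemma sup_undefined x y : j x y = None -> is_sup j m (Elt x) (Elt y) Top.
Proof.
  intro H. split; [simpl; intro T; destruct (T x y); congruence|].
  split; [simpl; auto|]. split; [simpl; auto|].
  intros [|w|] _; simpl; auto. intros Hx Hy.
  exact (op_none_no_ub L j join_assoc x y H w Hx Hy).
Qed.

Lemma sup_exists a b : inLs j m a -> inLs j m b -> exists s, is_sup j m a b s.
Proof.
  intros Ha Hb. destruct a as [|x|], b as [|y|].
  all: try (exists Bot; repeat split; simpl; auto; fail).
  all: try (exists Top; repeat split; simpl; auto; intros []; simpl; tauto).
  - exists (Elt y); repeat split; simpl; auto; try apply join_idem;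
      intros []; simpl; tauto.
  - exists (Elt x); repeat split; simpl; auto; try apply join_idem;
      intros []; simpl; tauto.
  - destruct (j x y) as [z|] eqn:Hxy.
    + exists (Elt z); apply sup_defined; exact Hxy.
    + exists Top; apply sup_undefined; exact Hxy.
Qed.

Lemma sup_sym a b s : is_sup j m a b s -> is_sup j m b a s.
Proof. intros (H1 & H2 & H3 & H4); repeat split; auto. Qed.

Lemma sup_sup_lub x y z s t : is_sup j m x y s -> is_sup j m s z t ->
  inLs j m t /\ leS j x t /\ leS j y t /\ leS j z t /\
  forall u, inLs j m u -> leS j x u -> leS j y u -> leS j z u -> leS j t u.
Proof.
  intros (Hs & Hxs & Hys & Hlubs) (Ht & Hst & Hzt & Hlubt).
  repeat split; auto; try (eapply leS_trans; eauto).
Qed.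

Lemma sup_assoc x y z s1 t s2 t' : is_sup j m x y s1 -> is_sup j m s1 z t ->
  is_sup j m z y s2 -> is_sup j m s2 x t' -> t = t'.
Proof.
  intros A B C D.
  destruct (sup_sup_lub _ _ _ _ _ A B) as (Ht & Hx & Hy & Hz & Hlub).
  destruct (sup_sup_lub _ _ _ _ _ C D) as (Ht' & Hz' & Hy' & Hx' & Hlub').
  apply leS_antisym; auto.
Qed.
End Extension.

Section Flip.
Variable L : Type.
Variables j m : L -> L -> option L.
Hypothesis PL : partial_lattice j m.

Definition flip (e : @ext L) : @ext L :=
  match e with Bot => Top | Elt x => Elt x | Top => Bot end.

Lemma flipK e : flip (flip e) = e.
Proof. destruct e; reflexivity. Qed.

Lemma inLs_flip e : inLs m j e <-> inLs j m (flip e).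
Proof. destruct e; simpl; tauto. Qed.

Lemma leS_flip a b : leS m a b <-> leS j (flip b) (flip a).
Proof.
  destruct a, b; simpl; try tauto.
  rewrite (ple_meet L j m PL). unfold ple. rewrite (meet_comm L j m PL). tauto.
Qed.

Lemma sup_flip a c s : is_sup m j a c s <-> is_inf j m (flip a) (flip c) (flip s).
Proof.
  unfold is_sup, is_inf. rewrite !leS_flip, inLs_flip.
  split; intros (H1 & H2 & H3 & H4); repeat split; auto.
  - intros t Ht G1 G2. rewrite <- (flipK t), <- leS_flip.
    apply H4; [rewrite inLs_flip, flipK| rewrite leS_flip, flipK..]; auto.
  - intros t Ht G1 G2. rewrite leS_flip. apply H4; [apply inLs_flip; exact Ht|..];
      rewrite <- leS_flip; auto.
Qed.

Lemma inf_flip a c s : is_inf m j a c s <-> is_sup j m (flip a) (flip c) (flip s).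
Proof.
  unfold is_sup, is_inf. rewrite !leS_flip, inLs_flip.
  split; intros (H1 & H2 & H3 & H4); repeat split; auto.
  - intros t Ht G1 G2. rewrite <- (flipK t), <- leS_flip.
    apply H4; [rewrite inLs_flip, flipK| rewrite leS_flip, flipK..]; auto.
  - intros t Ht G1 G2. rewrite leS_flip. apply H4; [apply inLs_flip; exact Ht|..];
      rewrite <- leS_flip; auto.
Qed.

(* Infima in L* exist, being suprema of the dual extension. *)
Lemma inf_exists a b : inLs j m a -> inLs j m b -> exists i, is_inf j m a b i.
Proof.
  intros Ha Hb.
  destruct (sup_exists L m j (partial_lattice_dual L j m PL) (flip a) (flip b))
    as [s Hs]; try (apply inLs_flip; rewrite flipK; assumption).
  exists (flip s). rewrite <- (flipK a), <- (flipK b). exact (proj1 (sup_flip _ _ _) Hs).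
Qed.

Lemma lat_cong_flip th :
  lat_cong j m th -> lat_cong m j (fun a b => th (flip a) (flip b)).
Proof.
  intros (Hcar & Hrefl & Hsym & Htrans & Hsup & Hinf).
  split; [|split; [|split; [|split; [|split]]]].
  - intros a b H. destruct (Hcar _ _ H). rewrite !inLs_flip. auto.
  - intros a H. apply Hrefl, inLs_flip, H.
  - intros a b H; auto.
  - intros a b c H1 H2; eauto.
  - intros a b c d s t H1 H2 H3 H4.
    apply (Hinf (flip a) (flip b) (flip c) (flip d)); auto; apply sup_flip; assumption.
  - intros a b c d s t H1 H2 H3 H4.
    apply (Hsup (flip a) (flip b) (flip c) (flip d)); auto; apply inf_flip; assumption.
Qed.
End Flip.

Arguments flip {L} e.

Lemma theta_flip L (j m : L -> L -> option L) E a b :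
  partial_lattice j m -> Theta m j E (flip a) (flip b) <-> Theta j m E a b.
Proof.
  intros PL. split.
  - intros H th Hth HE. rewrite <- (flipK L a), <- (flipK L b).
    apply (H (fun a b => th (flip a) (flip b))); [apply lat_cong_flip; auto|].
    intros x y; simpl; auto.
  - intros H th Hth HE.
    apply (H (fun a b => th (flip a) (flip b))).
    + apply lat_cong_flip; auto. apply partial_lattice_dual; exact PL.
    + intros x y; simpl; auto.
Qed.

Lemma is_con_dual L (j m : L -> L -> option L) E :
  partial_lattice j m -> is_con j m E -> is_con m j E.
Proof.
  intros PL [Heq H]. split; [exact Heq|]. intros x y.
  rewrite <- H. exact (theta_flip L j m E (Elt x) (Elt y) PL).
Qed.

Section ChoiceOperation.
Variable X : Type.
Variable R : pset X -> pset X -> pset X -> Prop.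

Lemma qop_spec A B :
  match qop R A B with Some C => R A B C | None => forall C, ~ R A B C end.
Proof.
  unfold qop. apply (epsilon_spec (inhabits None)
    (fun o => match o with Some C => R A B C | None => forall C, ~ R A B C end)).
  destruct (classic (exists C, R A B C)) as [[C HC]|N].
  - exists (Some C); exact HC.
  - exists None. intros C HC. apply N; eauto.
Qed.

Lemma qop_some A B C :
  (forall C1 C2, R A B C1 -> R A B C2 -> C1 = C2) -> R A B C -> qop R A B = Some C.
Proof.
  intros Huniq H. pose proof (qop_spec A B) as S. destruct (qop R A B) as [C'|].
  - f_equal; auto.
  - exfalso; eapply S; eauto.
Qed.

Lemma qop_none A B : (forall C, ~ R A B C) -> qop R A B = None.
Proof.
  intros N. pose proof (qop_spec A B) as S. destruct (qop R A B) as [C|]; auto.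
  exfalso; eapply N; eauto.
Qed.

Lemma qop_some_inv A B C : qop R A B = Some C -> R A B C.
Proof. intros H. pose proof (qop_spec A B) as S. rewrite H in S. exact S. Qed.
End ChoiceOperation.

Section QuotientJoin.
Variable L : Type.
Variables j m : L -> L -> option L.
Hypothesis PL : partial_lattice j m.
Variable E : L -> L -> Prop.
Hypothesis Con : is_con j m E.

Notation Th := (Theta j m E).

(* "Both ends lie in L*" is a lattice congruence, so Θ(E) relates only
   elements of L*. *)
Lemma carrier_lat_cong : lat_cong j m (fun a b => inLs j m a /\ inLs j m b).
Proof.
  repeat split; try tauto; intros;
    repeat match goal with
    | H : is_sup _ _ _ _ _ |- _ => destruct H as [? _]
    | H : is_inf _ _ _ _ _ |- _ => destruct H as [? _]
    end; tauto.
Qed.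

(* Θ(E), an intersection of lattice congruences, is a lattice congruence. *)
Lemma theta_lat_cong : lat_cong j m Th.
Proof.
  split; [|split; [|split; [|split; [|split]]]].
  - intros a b H. apply (H _ carrier_lat_cong). simpl; auto.
  - intros a Ha th (_ & Hrefl & _) HE. auto.
  - intros a b H th Hth HE. pose proof (H th Hth HE).
    destruct Hth as (_ & _ & Hsym & _). auto.
  - intros a b c H1 H2 th Hth HE. pose proof (H1 th Hth HE); pose proof (H2 th Hth HE).
    destruct Hth as (_ & _ & _ & Htrans & _). eauto.
  - intros a b c d s t H1 H2 H3 H4 th Hth HE.
    pose proof (H1 th Hth HE); pose proof (H2 th Hth HE).
    destruct Hth as (_ & _ & _ & _ & Hsup & _). eauto.
  - intros a b c d s t H1 H2 H3 H4 th Hth HE.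
    pose proof (H1 th Hth HE); pose proof (H2 th Hth HE).
    destruct Hth as (_ & _ & _ & _ & _ & Hinf). eauto.
Qed.

Lemma th_refl a : inLs j m a -> Th a a. Proof. apply theta_lat_cong. Qed.
Lemma th_sym a b : Th a b -> Th b a. Proof. apply theta_lat_cong. Qed.
Lemma th_trans a b c : Th a b -> Th b c -> Th a c. Proof. apply theta_lat_cong. Qed.
Lemma th_sup a b c d s t :
  Th a b -> Th c d -> is_sup j m a c s -> is_sup j m b d t -> Th s t.
Proof. apply theta_lat_cong. Qed.
Lemma th_inf a b c d s t :
  Th a b -> Th c d -> is_inf j m a c s -> is_inf j m b d t -> Th s t.
Proof. apply theta_lat_cong. Qed.

Lemma th_elt x y : Th (Elt x) (Elt y) <-> E x y. Proof. apply Con. Qed.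
Lemma E_refl x : E x x. Proof. destruct Con as ((Hrefl & _) & _); apply Hrefl. Qed.

Lemma th_of_class_eq x y : E x = E y -> Th (Elt x) (Elt y).
Proof. intro H. apply th_elt. rewrite H. apply E_refl. Qed.

Definition cls (s : @ext L) : pset L := fun z => Th s (Elt z).

Lemma cls_theta s t : Th s t -> cls s = cls t.
Proof.
  intro H. unfold cls. apply functional_extensionality; intro z.
  apply propositional_extensionality; split; intro G.
  - eapply th_trans; [apply th_sym|]; eauto.
  - eapply th_trans; eauto.
Qed.

Lemma cls_elt s w : Th s (Elt w) -> cls s = E w.
Proof.
  intro H. rewrite (cls_theta _ _ H). unfold cls.
  apply functional_extensionality; intro z.
  apply propositional_extensionality; apply th_elt.
Qed.

Definition class_of (s : @ext L) : option (pset L) :=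
  if excluded_middle_informative (exists w, cls s w) then Some (cls s) else None.

Lemma class_of_theta s t : Th s t -> class_of s = class_of t.
Proof.
  intro H. unfold class_of. rewrite (cls_theta _ _ H). reflexivity.
Qed.

Lemma class_of_elt w : class_of (Elt w) = Some (E w).
Proof.
  assert (Hw : Th (Elt w) (Elt w)) by (apply th_refl; exact I).
  unfold class_of. destruct excluded_middle_informative as [_|N].
  - f_equal. apply cls_elt, Hw.
  - exfalso. apply N. exists w. exact Hw.
Qed.

Lemma qjoin_rel_cls x y s C :
  qjoin_rel j m E (E x) (E y) C -> is_sup j m (Elt x) (Elt y) s -> C = cls s.
Proof.
  intros (x' & y' & s' & Hx & Hy & Hs' & HC & _) Hs. subst C.
  apply cls_theta. eapply th_sup; [| |exact Hs'|exact Hs];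
    apply th_of_class_eq; congruence.
Qed.

Lemma qjoin_classes x y s :
  is_sup j m (Elt x) (Elt y) s -> qjoin j m E (E x) (E y) = class_of s.
Proof.
  intro Hs. unfold class_of, qjoin.
  destruct excluded_middle_informative as [Hne|Hempty].
  - apply qop_some.
    + intros C1 C2 H1 H2.
      rewrite (qjoin_rel_cls _ _ _ _ H1 Hs), (qjoin_rel_cls _ _ _ _ H2 Hs).
      reflexivity.
    + exists x, y, s. split; [reflexivity|]. split; [reflexivity|].
      split; [exact Hs|]. split; [reflexivity|exact Hne].
  - apply qop_none. intros C HC. apply Hempty.
    rewrite <- (qjoin_rel_cls _ _ _ _ HC Hs).
    destruct HC as (_ & _ & _ & _ & _ & _ & _ & Hne). exact Hne.
Qed.

Lemma qjoin_idem A : qcar E A -> qjoin j m E A A = Some A.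
Proof.
  intros [x ->]. rewrite <- class_of_elt.
  apply qjoin_classes, (sup_defined L j m PL), (join_idem L j m PL).
Qed.

Lemma qjoin_comm A B : qjoin j m E A B = qjoin j m E B A.
Proof.
  assert (Hswap : forall A B C, qjoin_rel j m E A B C -> qjoin_rel j m E B A C).
  { intros A' B' C (x & y & s & H1 & H2 & H3 & H4 & H5).
    exists y, x, s. split; [exact H2|]. split; [exact H1|].
    split; [apply sup_sym; exact H3|]. split; [exact H4|exact H5]. }
  unfold qjoin. pose proof (qop_spec _ (qjoin_rel j m E) A B) as S.
  destruct (qop (qjoin_rel j m E) A B) as [C|].
  - symmetry. apply qop_some; [|apply Hswap; exact S].
    intros C1 C2 H1 H2. destruct (Hswap _ _ _ H1) as (x & y & s & -> & -> & Hs & _).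
    rewrite (qjoin_rel_cls _ _ _ _ (Hswap _ _ _ H1) Hs),
            (qjoin_rel_cls _ _ _ _ (Hswap _ _ _ H2) Hs).
    reflexivity.
  - symmetry. apply qop_none. intros C HC. apply (S C), Hswap, HC.
Qed.

Lemma qjoin_left_assoc x y z s t :
  is_sup j m (Elt x) (Elt y) s -> is_sup j m s (Elt z) t ->
  obind (fun U => qjoin j m E U (E z)) (qjoin j m E (E x) (E y)) = class_of t.
Proof.
  intros Hs Ht. rewrite (qjoin_classes _ _ _ Hs). unfold class_of at 1.
  destruct excluded_middle_informative as [[u Hu]|Hempty]; simpl.
  - rewrite (cls_elt _ _ Hu).
    destruct (sup_exists L j m PL (Elt u) (Elt z)) as [t' Ht']; simpl; auto.
    rewrite (qjoin_classes _ _ _ Ht'). apply class_of_theta.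
    eapply th_sup; [apply th_sym; exact Hu|exact (th_refl (Elt z) I)|exact Ht'|exact Ht].
  - (* s is neither Bot (it lies above x) nor in L (its class would contain it),
       so s = Top and then t = Top as well. *)
    destruct s as [|u|].
    + destruct Hs as (_ & Hxs & _). contradiction Hxs.
    + exfalso. apply Hempty. exists u. apply th_refl; exact I.
    + destruct Ht as (_ & HTop & _). destruct t; simpl in HTop; try contradiction.
      unfold class_of. destruct excluded_middle_informative; [contradiction|reflexivity].
Qed.

Lemma qjoin_assoc X Y Z : qcar E X -> qcar E Y -> qcar E Z ->
  obind (fun U => qjoin j m E U Z) (qjoin j m E X Y) =
  obind (fun V => qjoin j m E X V) (qjoin j m E Y Z).
Proof.
  intros [x ->] [y ->] [z ->].
  replace (fun V => qjoin j m E (E x) V) with (fun V => qjoin j m E V (E x))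
    by (apply functional_extensionality; intro; apply qjoin_comm).
  rewrite (qjoin_comm (E y)).
  destruct (sup_exists L j m PL (Elt x) (Elt y)) as [s1 Hs1]; simpl; auto.
  destruct (sup_exists L j m PL s1 (Elt z)) as [t Ht]; [apply Hs1|simpl; auto|].
  destruct (sup_exists L j m PL (Elt z) (Elt y)) as [s2 Hs2]; simpl; auto.
  destruct (sup_exists L j m PL s2 (Elt x)) as [t' Ht']; [apply Hs2|simpl; auto|].
  rewrite (qjoin_left_assoc _ _ _ _ _ Hs1 Ht), (qjoin_left_assoc _ _ _ _ _ Hs2 Ht').
  rewrite (sup_assoc L j m PL _ _ _ _ _ _ _ Hs1 Ht Hs2 Ht'). reflexivity.
Qed.

Lemma qjoin_closed A B C : qcar E A -> qcar E B -> qjoin j m E A B = Some C -> qcar E C.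
Proof.
  intros _ _ H. apply qop_some_inv in H.
  destruct H as (x & y & s & _ & _ & _ & -> & w & Hw).
  exists w. apply cls_elt, Hw.
Qed.

(* If x ∨* y Θ x, then y = (x ∨* y) ∧* y Θ x ∧* y. *)
Lemma inf_theta_of_sup_theta x y s i :
  is_sup j m (Elt x) (Elt y) s -> Th s (Elt x) -> is_inf j m (Elt x) (Elt y) i ->
  Th i (Elt y).
Proof.
  intros Hs Hsx Hi.
  assert (Hy : is_inf j m s (Elt y) (Elt y)).
  { destruct Hs as (_ & _ & Hys & _). split; [exact I|]. split; [exact Hys|].
    split; [apply (leS_refl L j m PL)|]. intros t _ _ Hty; exact Hty. }
  exact (th_inf _ _ _ _ _ _ (th_sym _ _ Hsx) (th_refl (Elt y) I) Hi Hy).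
Qed.
End QuotientJoin.

Lemma qmeet_dual L (j m : L -> L -> option L) E :
  partial_lattice j m -> qmeet j m E = qjoin m j E.
Proof.
  intros PL. unfold qmeet, qjoin. f_equal.
  apply functional_extensionality; intro A.
  apply functional_extensionality; intro B.
  apply functional_extensionality; intro C.
  apply propositional_extensionality; split;
    intros (x & y & s & Hx & Hy & Hs & -> & Hne); exists x, y, (flip s);
    (split; [exact Hx|]); (split; [exact Hy|]).
  - split; [apply (sup_flip L j m PL); rewrite flipK; exact Hs|].
    split; [|exact Hne].
    apply functional_extensionality; intro z. apply propositional_extensionality.
    symmetry. exact (theta_flip L j m E s (Elt z) PL).
  - split; [exact (proj1 (sup_flip L j m PL _ _ _) Hs)|].
    split; [|exact Hne].
    apply functional_extensionality; intro z. apply propositional_extensionality.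
    rewrite <- (theta_flip L j m E (flip s) (Elt z) PL), flipK. reflexivity.
Qed.

Lemma qjoin_absorb L (j m : L -> L -> option L) E :
  partial_lattice j m -> is_con j m E -> forall A B,
  qcar E A -> qcar E B -> qjoin j m E A B = Some A -> qmeet j m E A B = Some B.
Proof.
  intros PL Con A B [a ->] [b ->] H.
  destruct (sup_exists L j m PL (Elt a) (Elt b)) as [s Hs]; simpl; auto.
  destruct (inf_exists L j m PL (Elt a) (Elt b)) as [i Hi]; simpl; auto.
  assert (Hsa : Theta j m E s (Elt a)).
  { rewrite (qjoin_classes L j m E Con _ _ _ Hs) in H. unfold class_of in H.
    destruct excluded_middle_informative; [|discriminate].
    injection H as Hcls. change (cls L j m E s a).
    rewrite Hcls. apply (E_refl L j m E Con). }
  pose proof (inf_theta_of_sup_theta L j m PL E _ _ _ _ Hs Hsa Hi) as Hib.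
  assert (Hsup_dual : is_sup m j (Elt a) (Elt b) (flip i)).
  { apply (sup_flip L j m PL). rewrite flipK. exact Hi. }
  pose proof (is_con_dual L j m E PL Con) as Con'.
  rewrite (qmeet_dual L j m E PL), <- (class_of_elt L m j E Con'),
    (qjoin_classes L m j E Con' _ _ _ Hsup_dual).
  apply (class_of_theta L m j E).
  change (Elt b) with (flip (Elt b)). rewrite (theta_flip L j m E _ _ PL). exact Hib.
Qed.

Theorem mainTheorem7 (L : Type) (j m : L -> L -> option L) (E : L -> L -> Prop) :
  partial_lattice j m -> is_con j m E ->
  partial_lattice_on (qcar E) (qjoin j m E) (qmeet j m E).
Proof.
  intros PL Con.
  pose proof (partial_lattice_dual L j m PL) as PL'.
  pose proof (is_con_dual L j m E PL Con) as Con'.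
  pose proof (qmeet_dual L j m E PL) as Hmeet.
  pose proof (qmeet_dual L m j E PL') as Hjoin.
  rewrite Hmeet.
  split; [|split; [|split; [|split; [|split; [|split; [|split; [|split; [|split]]]]]]]].
  - apply (qjoin_closed L j m E Con).
  - apply (qjoin_closed L m j E Con').
  - apply (qjoin_idem L j m PL E Con).
  - apply (qjoin_idem L m j PL' E Con').
  - intros; apply (qjoin_comm L j m E Con).
  - intros; apply (qjoin_comm L m j E Con').
  - apply (qjoin_assoc L j m PL E Con).
  - apply (qjoin_assoc L m j PL' E Con').
  - rewrite <- Hmeet. apply (qjoin_absorb L j m E PL Con).
  - rewrite <- Hjoin. apply (qjoin_absorb L m j E PL' Con').
Qed.
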